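(* For a finite group $G$, the following conditions are equivalent: (a) $P(G)$ is a threshold graph; (b) $P(G)$ is a split graph; (c) $P(G)$ contains no induced subgraph isomorphic to $2K_2$; (d) $G$ satisfies the intersection condition, i.e. $G$ does not contain subgroups $H$ and $K$ such that both $H\setminus K$ and $K\setminus H$ contain elements of order greater than $2$; (e) $G$ is one of: a cyclic group of prime power order (including the trivial group); an elementary abelian $2$-group; a dihedral $2$-group; a cyclic group of order $2p$; a dihedral group of order $2p^n$ ($n\ge1$); or a dihedral group of order $4p$; where $p$ is an odd prime.
   Context: The power graph $P(G)$ has vertex set $G$, with distinct $u,v$ adjacent if and only if $u=v^i$ or $v=u^j$ for some integers $i,j$. A threshold graph is a graph with no induced subgraph isomorphic to $P_4$ (path on four vertices), $C_4$ ($4$-cycle) or $2K_2$ (two disjoint edges with no other edges between them). A split graph is a graph whose vertex set is a disjoint union of a set inducing a complete graph and a set inducing a graph with no edges. The dihedral group of order $2m$ is $\langle a,b: a^m=b^2=(ab)^2=1\rangle$. *)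

From mathcomp Require Import all_boot all_fingroup all_solvable.
Set Implicit Arguments.
Unset Strict Implicit.
Unset Printing Implicit Defensive.
Local Open Scope group_scope.

Section PowerGraph.
Variable gT : finGroupType.

(* Power graph P(G): distinct u, v adjacent iff u = v^i or v = u^j for some
   integers i, j; in a finite group this means u \in <[v]> or v \in <[u]>. *)
Definition pg_adj (u v : gT) : bool :=
  (u != v) && ((u \in <[v]>) || (v \in <[u]>)).

Definition has_induced_P4 (G : {set gT}) : Prop :=
  exists a b c d : gT,
    [/\ [&& a \in G, b \in G, c \in G & d \in G], uniq [:: a; b; c; d],
        [&& pg_adj a b, pg_adj b c & pg_adj c d] &
        [&& ~~ pg_adj a c, ~~ pg_adj b d & ~~ pg_adj a d]].

Definition has_induced_C4 (G : {set gT}) : Prop :=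
  exists a b c d : gT,
    [/\ [&& a \in G, b \in G, c \in G & d \in G], uniq [:: a; b; c; d],
        [&& pg_adj a b, pg_adj b c, pg_adj c d & pg_adj d a] &
        ~~ pg_adj a c && ~~ pg_adj b d].

Definition has_induced_2K2 (G : {set gT}) : Prop :=
  exists a b c d : gT,
    [/\ [&& a \in G, b \in G, c \in G & d \in G], uniq [:: a; b; c; d],
        pg_adj a b && pg_adj c d &
        [&& ~~ pg_adj a c, ~~ pg_adj a d, ~~ pg_adj b c & ~~ pg_adj b d]].

Definition pg_threshold (G : {set gT}) : Prop :=
  ~ has_induced_P4 G /\ ~ has_induced_C4 G /\ ~ has_induced_2K2 G.

Definition pg_clique (S : {set gT}) : Prop :=
  forall u v, u \in S -> v \in S -> u != v -> pg_adj u v.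

Definition pg_independent (S : {set gT}) : Prop :=
  forall u v, u \in S -> v \in S -> ~~ pg_adj u v.

Definition pg_split (G : {set gT}) : Prop :=
  exists S : {set gT}, [/\ S \subset G, pg_clique S & pg_independent (G :\: S)].

Definition intersection_condition (G : {group gT}) : Prop :=
  ~ exists H K : {group gT},
      [/\ H \subset G, K \subset G,
          (exists2 x, x \in H :\: K & 2 < #[x]) &
          (exists2 y, y \in K :\: H & 2 < #[y])].

Definition dihedral_2m (G : {group gT}) (m : nat) : Prop :=
  0 < m /\ G \isog Grp (a : b : (a ^+ m, b ^+ 2, (a * b) ^+ 2)).

Definition power_graph_class (G : {group gT}) : Prop :=
  (cyclic G /\ exists p e, prime p /\ #|G| = (p ^ e)%N)
  \/ 2.-abelem G
  \/ (exists k, dihedral_2m G (2 ^ k))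
  \/ (exists p, [/\ prime p, odd p &
        [\/ cyclic G /\ #|G| = (2 * p)%N,
            exists2 n, 0 < n & dihedral_2m G (p ^ n) |
            dihedral_2m G (2 * p)]]).

End PowerGraph.

From mathcomp Require Import all_boot all_fingroup all_solvable.
Set Implicit Arguments.
Unset Strict Implicit.
Unset Printing Implicit Defensive.

(* All five conditions of the theorem are shown equivalent to the chain
   condition on G: for any two elements x, y of order > 2, one of <[x]>, <[y]>
   contains the other.
   - Graph side.  The elements of order 2 are pairwise non-adjacent, and under
     the chain condition the other elements are pairwise adjacent; so P(G) is
     split.  A split graph has no induced 2K2 or C4, and an induced P4 must
     have its two ends outside the clique; under the chain condition the
     neighbourhoods of involutions are nested, which excludes this.
     Conversely an induced 2K2 is obtained from x, x^-1, y, y^-1 when <[x]>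
     and <[y]> are incomparable, and the cyclic subgroups <[x]>, <[y]> witness
     the failure of the intersection condition.
   - Group side.  By elementary number theory the divisors > 2 of n form a
     chain iff n is a prime power or twice an odd prime.  If G has an element
     of order > 2, one of maximal order generates a cyclic subgroup <[g]>
     containing all of them; elements outside <[g]> are involutions inverting
     g, so G is cyclic or dihedral of order 2 #[g].  Conversely, in the
     listed groups the elements of order > 2 lie in a cyclic subgroup whose
     order has a chain of divisors. *)

Definition chain_order (n : nat) : Prop :=
  (exists p e, prime p /\ n = p ^ e) \/
  (exists p, [/\ prime p, odd p & n = 2 * p]).

Definition divisor_chain (n : nat) : Prop :=
  forall d e, d %| n -> e %| n -> 2 < d -> 2 < e -> (d %| e) || (e %| d).

Lemma dvdn_double_prime_gt2 p d :
  prime p -> d %| 2 * p -> 2 < d -> d = p \/ d = 2 * p.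
Proof.
move=> p_pr d_dv d_gt2; have p_gt0 := prime_gt0 p_pr.
have p_dv_d : p %| d.
  apply: contraTT d_gt2 => p_ndv_d; rewrite -leqNgt.
  have d_p : coprime d p by rewrite coprime_sym prime_coprime.
  by move: d_dv; rewrite Gauss_dvdl // => /(dvdn_leq (isT : 0 < 2)).
rewrite -(divnK p_dv_d) in d_dv *; rewrite dvdn_pmul2r // in d_dv.
have [-> | q_neq1] := eqVneq (d %/ p) 1; first by left; rewrite mul1n.
by right; rewrite (prime_nt_dvdP (isT : prime 2) q_neq1 d_dv) mulnC.
Qed.

Lemma chain_order_divisor_chain n : chain_order n -> divisor_chain n.
Proof.
case=> [[p [e [p_pr ->]]] | [p [p_pr _ ->]]] d f d_dv f_dv d_gt2 f_gt2.
  have /(dvdn_pfactor _ _ p_pr)[i _ ->] := d_dv.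
  have /(dvdn_pfactor _ _ p_pr)[j _ ->] := f_dv.
  by case: (leqP i j) => [/dvdn_exp2l-> | /ltnW/dvdn_exp2l->]; rewrite ?orbT.
case: (dvdn_double_prime_gt2 p_pr d_dv d_gt2) => ->;
case: (dvdn_double_prime_gt2 p_pr f_dv f_gt2) => ->;
by rewrite ?dvdnn ?dvdn_mull ?orbT.
Qed.

(* If the divisors > 2 of n form a chain, n has at most one odd prime divisor:
   two distinct odd primes are incomparable. *)
Lemma divisor_chain_primes n q r : divisor_chain n -> prime q -> odd q ->
  q %| n -> prime r -> r %| n -> r = 2 \/ r = q.
Proof.
move=> ch q_pr q_odd q_dv r_pr r_dv.
case: (even_prime r_pr) => [|r_odd]; first by left.
have := ch r q r_dv q_dv (odd_prime_gt2 r_odd r_pr) (odd_prime_gt2 q_odd q_pr).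
by rewrite !dvdn_prime2 // eq_sym orbb => /eqP; right.
Qed.

(* The two incomparable pairs of divisors that rule out 4q and 2q^2. *)
Lemma four_odd_prime_incomparable q :
  prime q -> odd q -> ~~ (4 %| q) && ~~ (q %| 4).
Proof.
move=> q_pr q_odd; apply/andP; split; apply/negP.
  by move/(dvdn_trans (isT : 2 %| 4)); rewrite dvdn2 q_odd.
have -> : 4 = 2 ^ 2 by [].
case/(dvdn_pfactor _ _ (isT : prime 2)) => k _ q_eq.
have := odd_prime_gt2 q_odd q_pr; move: q_odd.
by rewrite q_eq; case: k {q_eq} => [|k]; rewrite ?expn0 // expnS oddM.
Qed.

Lemma square_double_prime_incomparable q :
  prime q -> odd q -> ~~ (q ^ 2 %| 2 * q) && ~~ (2 * q %| q ^ 2).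
Proof.
move=> q_pr q_odd.
rewrite expnS expn1 !dvdn_pmul2r ?prime_gt0 // dvdn2 q_odd andbT.
by rewrite dvdn_prime2 //; case: eqP q_odd => // ->.
Qed.

(* An even n with a divisor chain and an odd prime divisor q is 2q: otherwise
   4 or q^2 would divide n, against the two incomparable pairs above. *)
Lemma divisor_chain_even n q : 0 < n -> divisor_chain n -> prime q -> odd q ->
  q %| n -> 2 %| n -> n = 2 * q.
Proof.
move=> n_gt0 ch q_pr q_odd q_dv two_dv; have q_gt2 := odd_prime_gt2 q_odd q_pr.
have dq_dv : 2 * q %| n by rewrite Gauss_dvd ?coprime2n ?two_dv.
pose k := n %/ (2 * q); have n_eq : n = k * (2 * q) by rewrite divnK.
have k_gt0 : 0 < k by move: n_gt0; rewrite n_eq muln_gt0 => /andP[].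
have [k_le1 | k_gt1] := leqP k 1.
  by rewrite n_eq (_ : k = 1) ?mul1n //; apply/eqP; rewrite eqn_leq k_le1.
have r_dv := pdiv_dvd k; have r_dvn : pdiv k %| n by rewrite n_eq dvdn_mulr.
case: (divisor_chain_primes ch q_pr q_odd q_dv (pdiv_prime k_gt1) r_dvn) => r_eq;
  rewrite r_eq in r_dv.
  have four_dv : 4 %| n by rewrite n_eq -[4]/(2 * 2) dvdn_mul // dvdn_mulr.
  case/andP: (four_odd_prime_incomparable q_pr q_odd).
  move=> /negPf-four_q /negPf-q_four.
  by move: (ch 4 q four_dv q_dv isT q_gt2); rewrite four_q q_four.
have sq_dv : q ^ 2 %| n by rewrite n_eq expnS expn1 dvdn_mul // dvdn_mull.
have sq_gt2 : 2 < q ^ 2.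
  by rewrite (leq_trans q_gt2) // expnS expn1 leq_pmull ?prime_gt0.
have dbl_gt2 : 2 < 2 * q by rewrite (leq_trans q_gt2) // leq_pmull.
case/andP: (square_double_prime_incomparable q_pr q_odd).
move=> /negPf-sq_dbl /negPf-dbl_sq.
by move: (ch _ _ sq_dv dq_dv sq_gt2 dbl_gt2); rewrite sq_dbl dbl_sq.
Qed.

Lemma divisor_chain_chain_order n : 0 < n -> divisor_chain n -> chain_order n.
Proof.
move=> n_gt0 ch.
have [/hasP[q q_n q_neq2] | /hasPn all2] := boolP (has (predC1 2) (primes n));
  last first.
  have /p_natP[k ->] : 2.-nat n.
    apply/pnatP => // p p_pr p_dv.
    by have := all2 p; rewrite mem_primes p_pr n_gt0 p_dv /= negbK => /(_ isT).
  by left; exists 2, k.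
rewrite mem_primes n_gt0 /= in q_n; case/andP: q_n => q_pr q_dv.
have q_odd : odd q by case: (even_prime q_pr) => // q2; rewrite q2 in q_neq2.
have [two_dv | two_ndv] := boolP (2 %| n).
  by right; exists q; split=> //; apply: divisor_chain_even.
have /p_natP[k ->] : q.-nat n.
  apply/pnatP => // r r_pr r_dv; apply/eqP.
  case: (divisor_chain_primes ch q_pr q_odd q_dv r_pr r_dv) => // r2.
  by rewrite -r2 r_dv in two_ndv.
by left; exists q, k.
Qed.

Local Open Scope group_scope.

Section PowerGraphFacts.
Variable gT : finGroupType.
Implicit Types (t s u v w x y : gT) (G S : {set gT}).

Definition chain_condition G : Prop :=
  forall x y, x \in G -> y \in G -> 2 < #[x] -> 2 < #[y] ->
    (x \in <[y]>) || (y \in <[x]>).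

Definition noninvolutions G : {set gT} := [set z in G | #[z] != 2].

Lemma pg_adjC u v : pg_adj u v = pg_adj v u.
Proof. by rewrite /pg_adj eq_sym orbC. Qed.

Lemma pg_adj1 v : v != 1 -> pg_adj 1 v.
Proof. by move=> v_neq1; rewrite /pg_adj eq_sym v_neq1 group1. Qed.

Lemma order_gt2 x : x != 1 -> #[x] != 2 -> 2 < #[x].
Proof. by rewrite -order_eq1; case: #[x] (order_gt0 x) => [|[|[|]]]. Qed.

(* Two involutions generate incomparable subgroups, so are non-adjacent. *)
Lemma involutions_nonadj u v : #[u] = 2 -> #[v] = 2 -> ~~ pg_adj u v.
Proof.
move=> ou ov; rewrite /pg_adj (cycle2g ou) (cycle2g ov) !inE.
rewrite -!order_eq1 ou ov /= (eq_sym v u).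
by case: (u == v).
Qed.

Lemma involution_adj t v : #[t] = 2 -> pg_adj t v -> v = 1 \/ t \in <[v]>.
Proof.
move=> ot /andP[t_neq_v /orP[t_v | ]]; first by right.
by rewrite (cycle2g ot) !inE [v == t]eq_sym (negPf t_neq_v) orbF => /eqP; left.
Qed.

Lemma invg_neq_order_gt2 x : 2 < #[x] -> x^-1 != x.
Proof.
rewrite eq_invg_mul -expg2 -order_dvdn ltnNge; apply: contra.
exact: dvdn_leq.
Qed.

Section SplitPartition.
Variables (G S : {set gT}).
Hypotheses (S_clique : pg_clique S) (S_indep : pg_independent (G :\: S)).

Lemma split_adj u v : u \in G -> v \in G -> pg_adj u v -> (u \in S) || (v \in S).
Proof.
move=> Gu Gv uv; apply/norP => -[uS vS].
by move: uv; apply/negP; apply: S_indep; rewrite inE ?uS ?vS.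
Qed.

Lemma split_nonadj u v : u != v -> ~~ pg_adj u v -> (u \notin S) || (v \notin S).
Proof.
move=> u_neq_v; apply: contraR; rewrite negb_or !negbK => /andP[uS vS].
exact: S_clique.
Qed.

(* The non-edges of an induced 2K2 (resp. C4) force two adjacent vertices
   outside S, or two distinct non-adjacent vertices inside S. *)
Lemma split_no2K2 : ~ has_induced_2K2 G.
Proof.
move=> [a [b [c [d [/and4P[Ga Gb Gc Gd] uniq_abcd /andP[ab cd] nonadj]]]]].
move: uniq_abcd nonadj; rewrite /= !inE !negb_or.
move=> /and4P[/and3P[_ a_c a_d] /andP[b_c b_d] _ _] /and4P[ac ad bc bd].
move: (split_adj Ga Gb ab) (split_adj Gc Gd cd).
move: (split_nonadj a_c ac) (split_nonadj a_d ad).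
move: (split_nonadj b_c bc) (split_nonadj b_d bd).
by case: (a \in S); case: (b \in S); case: (c \in S); case: (d \in S).
Qed.

Lemma split_noC4 : ~ has_induced_C4 G.
Proof.
move=> [a [b [c [d [/and4P[Ga Gb Gc Gd] uniq_abcd adj /andP[ac bd]]]]]].
move: uniq_abcd adj; rewrite /= !inE !negb_or.
move=> /and4P[/and3P[_ a_c _] /andP[_ b_d] _ _] /and4P[ab bc cd da].
move: (split_adj Ga Gb ab) (split_adj Gb Gc bc).
move: (split_adj Gc Gd cd) (split_adj Gd Ga da).
move: (split_nonadj a_c ac) (split_nonadj b_d bd).
by case: (a \in S); case: (b \in S); case: (c \in S); case: (d \in S).
Qed.

Lemma split_P4_ends a b c d :
  [&& a \in G, b \in G, c \in G & d \in G] -> uniq [:: a; b; c; d] ->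
  [&& pg_adj a b, pg_adj b c & pg_adj c d] ->
  [&& ~~ pg_adj a c, ~~ pg_adj b d & ~~ pg_adj a d] ->
  [/\ a \notin S, b \in S, c \in S & d \notin S].
Proof.
move=> /and4P[Ga Gb Gc Gd] uniq_abcd /and3P[ab bc cd] /and3P[ac bd ad].
move: uniq_abcd; rewrite /= !inE !negb_or.
move=> /and4P[/and3P[_ a_c a_d] /andP[_ b_d] _ _].
move: (split_adj Ga Gb ab) (split_adj Gb Gc bc) (split_adj Gc Gd cd).
move: (split_nonadj a_c ac) (split_nonadj b_d bd) (split_nonadj a_d ad).
by case: (a \in S); case: (b \in S); case: (c \in S); case: (d \in S).
Qed.
End SplitPartition.

Section ChainCondition.
Variable G : {group gT}.

(* The intersection condition only has to be tested on cyclic subgroups. *)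
Lemma intersection_condition_iff_chain :
  intersection_condition G <-> chain_condition G.
Proof.
split=> [IC x y Gx Gy ox oy | ch [H [K [sHG sKG [x /setDP[Hx Kx'] ox]]]]].
  apply/norP => -[x_y' y_x']; apply: IC; exists <[x]>%G, <[y]>%G.
  split; rewrite ?cycle_subG //; [exists x | exists y] => //.
    by rewrite inE x_y' cycle_id.
  by rewrite inE y_x' cycle_id.
case=> y /setDP[Ky Hy'] oy.
case/orP: (ch x y (subsetP sHG x Hx) (subsetP sKG y Ky) ox oy) => [xy | yx].
  by case/negP: Kx'; apply: subsetP xy; rewrite cycle_subG.
by case/negP: Hy'; apply: subsetP yx; rewrite cycle_subG.
Qed.

(* Incomparable <[x]>, <[y]> give the induced 2K2 x - x^-1, y - y^-1. *)
Lemma no2K2_chain : ~ has_induced_2K2 G -> chain_condition G.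
Proof.
move=> no2K2 x y Gx Gy ox oy; apply/norP => -[x_y' y_x']; apply: no2K2.
have x_y : x != y by apply: contraNneq x_y' => ->; rewrite cycle_id.
have x_y1 : x != y^-1 by apply: contraNneq x_y' => ->; rewrite groupV cycle_id.
have x1_y : x^-1 != y by apply: contraNneq y_x' => <-; rewrite groupV cycle_id.
exists x, x^-1, y, y^-1; split.
- by rewrite !groupV Gx Gy.
- rewrite /= !inE !negb_or (inj_eq invg_inj) x_y x_y1 x1_y.
  by rewrite eq_sym invg_neq_order_gt2 // eq_sym invg_neq_order_gt2.
- by rewrite /pg_adj !groupV !cycle_id !orbT eq_sym invg_neq_order_gt2 //
    eq_sym invg_neq_order_gt2.
- by rewrite /pg_adj !cycleV !groupV (negPf x_y') (negPf y_x') !andbF.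
Qed.

Lemma chain_noninvolutions_clique :
  chain_condition G -> pg_clique (noninvolutions G).
Proof.
move=> ch u v; rewrite !inE => /andP[Gu ou] /andP[Gv ov] u_neq_v.
have [u1 | u_neq1] := eqVneq u 1; first by rewrite u1 pg_adj1 // -u1 eq_sym.
have [v1 | v_neq1] := eqVneq v 1; first by rewrite v1 pg_adjC pg_adj1 // -v1.
by rewrite /pg_adj u_neq_v ch // order_gt2.
Qed.

Lemma involutions_independent : pg_independent (G :\: noninvolutions G).
Proof.
move=> u v; rewrite !inE => /andP[u_inv Gu] /andP[v_inv Gv].
rewrite Gu Gv /= !negbK in u_inv v_inv.
exact: involutions_nonadj (eqP u_inv) (eqP v_inv).
Qed.

Lemma chain_split : chain_condition G -> pg_split G.
Proof.
move=> ch; exists (noninvolutions G); split.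
- by apply/subsetP => z; rewrite inE => /andP[].
- exact: chain_noninvolutions_clique.
- exact: involutions_independent.
Qed.

(* Under the chain condition, the neighbourhoods of any two involutions in the
   clique of non-involutions are nested; this excludes induced paths P4. *)
Lemma chain_involution_nbhds_nested t s v w : chain_condition G ->
  v \in G -> w \in G -> #[t] = 2 -> #[s] = 2 -> #[v] != 2 -> #[w] != 2 ->
  pg_adj t v -> pg_adj s w -> pg_adj t w || pg_adj s v.
Proof.
move=> ch Gv Gw ot os ov ow tv sw.
have [v1 | t_v] := involution_adj ot tv.
  by rewrite v1 [pg_adj s 1]pg_adjC pg_adj1 ?orbT // -order_eq1 os.
have [w1 | s_w] := involution_adj os sw.
  by rewrite w1 [pg_adj t 1]pg_adjC pg_adj1 // -order_eq1 ot.
have nontrivial (z r : gT) : #[r] = 2 -> r \in <[z]> -> z != 1.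
  by move=> or; apply: contraTneq => ->; rewrite cycle1 inE -order_eq1 or.
have adj (z r : gT) : #[r] = 2 -> #[z] != 2 -> r \in <[z]> -> pg_adj r z.
  move=> or oz r_z; rewrite /pg_adj r_z andbT.
  by apply: contraNneq oz => <-; rewrite or.
have [v_w | w_v] := orP (ch v w Gv Gw (order_gt2 (nontrivial _ _ ot t_v) ov)
                                    (order_gt2 (nontrivial _ _ os s_w) ow)).
  by rewrite adj // (subsetP _ _ t_v) // cycle_subG.
by rewrite orbC adj // (subsetP _ _ s_w) // cycle_subG.
Qed.

(* An induced P4 a - b - c - d would have involutions a, d at its ends, with
   non-nested neighbourhoods: a ~ b, d ~ c but a !~ c, d !~ b. *)
Lemma chain_threshold : chain_condition G -> pg_threshold G.
Proof.
move=> ch; have clique := chain_noninvolutions_clique ch.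
have indep := involutions_independent.
split; last split; last exact: split_no2K2 clique indep; last first.
  exact: split_noC4 clique indep.
move=> [a [b [c [d [inG uniq_abcd adj nonadj]]]]].
have [aS' bS cS dS'] := split_P4_ends clique indep inG uniq_abcd adj nonadj.
case/and4P: inG => Ga _ _ Gd; case/and3P: adj => ab _ cd.
case/and3P: nonadj => ac bd _.
move: aS' bS cS dS'; rewrite !inE Ga Gd /= !negbK.
move=> /eqP oa /andP[Gb ob] /andP[Gc oc] /eqP od.
have := chain_involution_nbhds_nested ch Gb Gc oa od ob oc ab.
by rewrite pg_adjC cd (negPf ac) pg_adjC (negPf bd) => /(_ isT).
Qed.

Lemma no2K2_iff_chain : ~ has_induced_2K2 G <-> chain_condition G.
Proof.
split; first exact: no2K2_chain.
by move/chain_split => -[S [_ clique indep]]; apply: split_no2K2 clique indep.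
Qed.

Lemma split_iff_chain : pg_split G <-> chain_condition G.
Proof.
split; last exact: chain_split.
by case=> S [_ clique indep]; apply/no2K2_iff_chain/(split_no2K2 clique indep).
Qed.

Lemma threshold_iff_chain : pg_threshold G <-> chain_condition G.
Proof.
split; last exact: chain_threshold.
by case=> _ [_ no2K2]; apply/no2K2_iff_chain.
Qed.
End ChainCondition.
End PowerGraphFacts.

Lemma order_le2 (gT : finGroupType) (z : gT) : (#[z] <= 2) = (z ^+ 2 == 1).
Proof. by rewrite -order_dvdn; case: #[z] (order_gt0 z) => [|[|[|]]]. Qed.

Lemma conjg_inv_involution (gT : finGroupType) (x y : gT) : y ^+ 2 == 1 ->
  (x ^ y == x^-1) = ((x * y) ^+ 2 == 1).
Proof.
rewrite expg2 -eq_invg_mul => /eqP yV.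
by rewrite conjgE yV eq_sym eq_invg_mul expg2 !mulgA.
Qed.

(* The library presents 'D_2n via x ^ y = x^-1; here via (x * y) ^+ 2 = 1. *)
Lemma dihedral_presentation n : 1 < n ->
  'D_(n.*2) \isog Grp (a : b : (a ^+ n, b ^+ 2, (a * b) ^+ 2)).
Proof.
move=> n_gt1 gT G; rewrite (Grp_dihedral n_gt1).
apply/existsP/existsP => -[[x y]] /=; rewrite !xpair_eqE => /and4P[gen xn y2 rel];
  exists (x, y); rewrite /= !xpair_eqE gen xn y2 /=.
  by rewrite -conjg_inv_involution.
by rewrite conjg_inv_involution.
Qed.

Section ChainGroups.
Variable gT : finGroupType.
Implicit Types (a b g x y z : gT) (G H : {group gT}).

Lemma chain_condition_sub G H : {in G, forall z, 2 < #[z] -> z \in H} ->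
  chain_condition H -> chain_condition G.
Proof. by move=> GH ch x y Gx Gy ox oy; apply: ch; rewrite ?GH. Qed.

(* In a cyclic group the subgroups are determined by their orders. *)
Lemma mem_cycle_order_dvd g x y : x \in <[g]> -> y \in <[g]> ->
  #[x] %| #[y] -> x \in <[y]>.
Proof.
move=> xg yg xy.
by rewrite -cycle_subG -(cardSg_cyclic (cycle_cyclic g)) ?cycle_subG.
Qed.

Lemma cycle_chain g m : divisor_chain m -> #[g] %| m -> chain_condition <[g]>.
Proof.
move=> ch gm x y xg yg ox oy.
have dvd_m z : z \in <[g]> -> #[z] %| m by move/order_dvdG/dvdn_trans; apply.
case/orP: (ch _ _ (dvd_m x xg) (dvd_m y yg) ox oy) => [xy | yx].
  by rewrite (mem_cycle_order_dvd xg yg xy).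
by rewrite (mem_cycle_order_dvd yg xg yx) orbT.
Qed.

Lemma dihedral_rotations a b z : b ^+ 2 == 1 -> (a * b) ^+ 2 == 1 ->
  z \in <[a]> <*> <[b]> -> 2 < #[z] -> z \in <[a]>.
Proof.
move=> b2 ab2 z_ab oz.
have aB : a ^ b = a^-1 by apply/eqP; rewrite conjg_inv_involution.
have nab : <[b]> \subset 'N(<[a]>).
  by rewrite cycle_subG; apply/normP; rewrite -cycleJ aB cycleV.
move: z_ab; rewrite (norm_joinEr nab).
case/mulsgP => c d /cycleP[i ->] /cycleP[j ->] z_eq; subst z.
rewrite -(expg_mod _ (eqP b2)) modn2 in oz *.
case: (odd j) oz => /= oz; last by rewrite expg0 mulg1 groupX ?cycle_id.
have : (a ^+ i * b) ^+ 2 == 1 by rewrite -conjg_inv_involution // conjXg aB expVgn.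
by rewrite -order_le2 leqNgt oz.
Qed.

(* Dihedral groups of order 2m, m with a divisor chain, satisfy the chain
   condition: their elements of order > 2 are rotations. *)
Lemma dihedral_chain G m : divisor_chain m -> dihedral_2m G m ->
  chain_condition G.
Proof.
move=> ch [_ /isoGrp_hom /existsP[[a b]]] /=.
rewrite !xpair_eqE => /and4P[/eqP gen am b2 ab2].
apply: (chain_condition_sub (H := <[a]>%G)); last first.
  by apply: (cycle_chain ch); rewrite order_dvdn.
by move=> z; rewrite -gen; apply: dihedral_rotations.
Qed.

Lemma power_graph_class_chain G : power_graph_class G -> chain_condition G.
Proof.
have cyclic_chain m : chain_order m -> cyclic G -> #|G| = m -> chain_condition G.
  move=> cm /cyclicP[g G_eq] oG; rewrite G_eq.
  by apply: (cycle_chain (chain_order_divisor_chain cm)); rewrite -oG G_eq.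
case=> [[cG [p [e [p_pr oG]]]] | [abG | [[k dG] | [p [p_pr p_odd cl]]]]].
- by apply: cyclic_chain cG oG; left; exists p, e.
- move=> x y Gx _ ox _; have /(abelemP (isT : prime 2))[_ x2] := abG.
  by move: ox; rewrite ltnNge order_le2 (x2 x Gx) eqxx.
- by apply: dihedral_chain dG; apply: chain_order_divisor_chain; left; exists 2, k.
have cp : chain_order (2 * p) by right; exists p.
case: cl => [[cG oG] | [n _ dG] | dG].
- exact: cyclic_chain cG oG.
- by apply: dihedral_chain dG; apply: chain_order_divisor_chain; left; exists p, n.
- exact: dihedral_chain (chain_order_divisor_chain cp) dG.
Qed.
End ChainGroups.

Section ChainClassification.
Variable gT : finGroupType.
Implicit Types (g x y z : gT) (G : {group gT}).

Lemma exponent2_abelem G : {in G, forall z, #[z] <= 2} -> 2.-abelem G.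
Proof.
move=> le2; have sq z : z \in G -> z^-1 = z.
  by move=> Gz; apply/eqP; rewrite eq_invg_mul -expg2 -order_le2 le2.
apply/(abelemP (isT : prime 2)); split=> [|z Gz]; last first.
  by apply/eqP; rewrite -order_le2 le2.
apply/centsP => x Gx y Gy.
by rewrite /commute -[x * y]sq ?groupM // invMg sq ?sq.
Qed.

Lemma chain_max_order G g : chain_condition G -> g \in G ->
  {in G, forall z, #[z] <= #[g]} -> 2 < #[g] ->
  {in G, forall y, 2 < #[y] -> y \in <[g]>}.
Proof.
move=> ch Gg gmax og y Gy oy; case/orP: (ch y g Gy Gg oy og) => // g_y.
have sgy : <[g]> \subset <[y]> by rewrite cycle_subG.
suff -> : <[g]> = <[y]> by rewrite cycle_id.
by apply/eqP; rewrite eqEcard sgy; apply: gmax.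
Qed.

(* The chain condition on a cyclic group forces the divisors > 2 of its order
   to form a chain, since there is a subgroup of each order. *)
Lemma cycle_chain_divisor_chain g : chain_condition <[g]> -> divisor_chain #[g].
Proof.
move=> ch d e dg eg d_gt2 e_gt2.
have o_div k : k %| #[g] -> 2 < k -> #[g ^+ (#[g] %/ k)] = k.
  move=> kg k_gt2; rewrite orderXdiv ?dvdn_div // divnA // mulKn //.
have := ch _ _ (mem_cycle g (#[g] %/ d)) (mem_cycle g (#[g] %/ e)).
have dvd_of_mem x y : x \in <[y]> -> #[x] %| #[y] by exact: order_dvdG.
rewrite o_div // o_div // => /(_ d_gt2 e_gt2) /orP[] /dvd_of_mem.
  by rewrite !o_div // => ->.
by rewrite !o_div // => ->; rewrite orbT.
Qed.

Section DihedralRecognition.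
Variables (G : {group gT}) (g : gT).
Hypotheses (Gg : g \in G) (og : 2 < #[g]).
Hypothesis outside_sq : {in G, forall z, z \notin <[g]> -> z ^+ 2 = 1}.

(* z and g * z are involutions, hence z inverts g. *)
Lemma outside_inverts z : z \in G -> z \notin <[g]> -> g ^ z = g^-1.
Proof.
move=> Gz z_g'; apply/eqP; rewrite conjg_inv_involution ?outside_sq //.
  by rewrite groupM.
by apply: contra z_g' => gz_g; rewrite -(mulKg g z) groupM ?groupV ?cycle_id.
Qed.

(* The elements outside <[g]> form a single coset: otherwise g^-1 = g. *)
Lemma outside_mul z y : z \in G -> y \in G -> z \notin <[g]> -> y \notin <[g]> ->
  z * y \in <[g]>.
Proof.
move=> Gz Gy z_g' y_g'; apply/idPn => zy_g'.
have := outside_inverts (groupM Gz Gy) zy_g'.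
rewrite conjgM outside_inverts // conjVg outside_inverts // invgK => g_inv.
by move: og; rewrite ltnNge order_le2 expg2 {1}g_inv mulVg eqxx.
Qed.

(* G = <[g]> <*> <[x]> has order 2 #[g] and the dihedral presentation. *)
Lemma dihedral_recognition x : x \in G -> x \notin <[g]> -> dihedral_2m G #[g].
Proof.
move=> Gx x_g'; have x2 := outside_sq Gx x_g'.
have x_neq1 : x != 1 by apply: contraNneq x_g' => ->; rewrite group1.
have ox : #[x] = 2.
  apply/eqP; rewrite eqn_leq order_le2 x2 eqxx /=.
  by rewrite ltn_neqAle order_gt0 andbT eq_sym order_eq1.
have nx : <[x]> \subset 'N(<[g]>).
  by rewrite cycle_subG; apply/normP; rewrite -cycleJ outside_inverts ?cycleV.
have gen : <[g]> <*> <[x]> = G.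
  apply/eqP; rewrite eqEsubset join_subG !cycle_subG Gg Gx; apply/subsetP => y Gy.
  have [y_g | y_g'] := boolP (y \in <[g]>); first by rewrite mem_gen // inE y_g.
  have xx : x * x = 1 by rewrite -expg2.
  rewrite -(mul1g y) -xx -mulgA groupM ?mem_gen // inE ?cycle_id ?orbT //.
  by rewrite outside_mul.
have oG : #|G| = #[g].*2.
  rewrite -gen norm_joinEr // TI_cardMg -?orderE ?ox ?muln2 //.
  by rewrite setIC prime_TIg -?orderE ?ox // cycle_subG.
split; first exact: order_gt0.
apply: isoGrp_trans (dihedral_presentation (ltnW og)).
apply/(isoGrpP _ (Grp_dihedral (ltnW og))); split.
  by rewrite (card_dihedral (ltnW og)) oG.
apply/existsP; exists (g, x); rewrite /= !xpair_eqE gen eqxx expg_order x2 eqxx.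
by rewrite outside_inverts ?eqxx.
Qed.
End DihedralRecognition.

Lemma cyclic_power_graph_class G :
  cyclic G -> chain_order #|G| -> power_graph_class G.
Proof.
move=> cG [[p [e [p_pr oG]]] | [p [p_pr p_odd oG]]].
  by left; split=> //; exists p, e.
by do 3!right; exists p; split=> //; apply: Or31.
Qed.

Lemma dihedral_power_graph_class G m :
  2 < m -> chain_order m -> dihedral_2m G m -> power_graph_class G.
Proof.
move=> m_gt2 [[p [e [p_pr m_eq]]] | [p [p_pr p_odd ->]]] dG; last first.
  by do 3!right; exists p; split=> //; apply: Or33.
rewrite m_eq in dG; case: (even_prime p_pr) => [p2 | p_odd].
  by right; right; left; exists e; rewrite -p2.
do 3!right; exists p; split=> //; apply: Or32; exists e => //.
by case: e m_eq dG => // m1; rewrite m1 expn0 in m_gt2.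
Qed.

Lemma chain_power_graph_class G : chain_condition G -> power_graph_class G.
Proof.
move=> ch; have [/existsP[x0 /andP[Gx0 ox0]] | small] :=
  boolP [exists z in G, 2 < #[z]]; last first.
  right; left; apply: exponent2_abelem => z Gz; rewrite leqNgt.
  by apply: contra small => oz; apply/existsP; exists z; rewrite Gz.
have [g Gg gmax] := @arg_maxnP _ x0 (mem G) (fun z => #[z]) Gx0.
have og : 2 < #[g] := leq_trans ox0 (gmax _ Gx0).
have cg : chain_order #[g].
  apply: divisor_chain_chain_order (order_gt0 g) (cycle_chain_divisor_chain _).
  apply: (chain_condition_sub _ ch) => z z_g _.
  by apply: subsetP z z_g; rewrite cycle_subG.
have [sGg | /subsetPn[x Gx x_g']] := boolP (G \subset <[g]>).
  have G_eq : G :=: <[g]> by apply/eqP; rewrite eqEsubset sGg cycle_subG.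
  by apply: cyclic_power_graph_class; rewrite G_eq ?cycle_cyclic.
have dG : dihedral_2m G #[g].
  apply: (dihedral_recognition Gg og _ Gx x_g') => z Gz z_g'.
  apply/eqP; rewrite -order_le2 leqNgt.
  exact: contra (chain_max_order ch Gg gmax og Gz) z_g'.
exact: dihedral_power_graph_class og cg dG.
Qed.

Lemma power_graph_class_iff_chain G : power_graph_class G <-> chain_condition G.
Proof.
split; [exact: power_graph_class_chain | exact: chain_power_graph_class].
Qed.
End ChainClassification.

Theorem mainTheorem13 (gT : finGroupType) (G : {group gT}) :
  [/\ (pg_threshold G <-> pg_split G),
      (pg_split G <-> ~ has_induced_2K2 G),
      (~ has_induced_2K2 G <-> intersection_condition G) &
      (intersection_condition G <-> power_graph_class G)].
Proof.
split.
- exact: iff_trans (threshold_iff_chain G) (iff_sym (split_iff_chain G)).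
- exact: iff_trans (split_iff_chain G) (iff_sym (no2K2_iff_chain G)).
- exact: iff_trans (no2K2_iff_chain G)
                   (iff_sym (intersection_condition_iff_chain G)).
- exact: iff_trans (intersection_condition_iff_chain G)
                   (iff_sym (power_graph_class_iff_chain G)).
Qed.
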